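(* Let $A$ be the random matrix defined in the context. There is an absolute constant $c$ such that, with probability $1-o(1)$ as $k\to\infty$ (with $D\ge c\log k$), for every $\delta\ge c\sqrt{(\log k)/D}$ we have $1-\delta\le\lambda_\delta(A)\le1$.
   Context: Random instance: let $S_1,\dots,S_k\subseteq[D]$ be independent uniformly random subsets of $[D]$ (each element included independently with probability $1/2$), and let $A\in\mathbb{R}^{D\times k}$ have $A_{ij}=1/|S_j|$ if $i\in S_j$ and $A_{ij}=0$ otherwise. For a matrix $M$, $\|M\|_{\max}=\max_{i,j}|M_{ij}|$. For $\delta\ge 0$, $\lambda_\delta(A)$ is the optimal value of: minimize $\|B\|_{\max}$ over $B\in\mathbb{R}^{k\times D}$ subject to $\|BA-I_k\|_{\max}\le\delta$. *)

From mathcomp Require Import all_boot.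
From Stdlib Require Export Reals.
Open Scope R_scope.

(* Sample space: k independent uniformly random subsets S_1..S_k of [D];
   uniform over all (2^D)^k outcomes. *)
Definition Omega (D k : nat) := {ffun 'I_k -> {set 'I_D}}.

Definition Amat {D k : nat} (S : Omega D k) (i : 'I_D) (j : 'I_k) : R :=
  if i \in S j then / INR #|S j| else 0.

Definition maxnorm {m n : nat} (M : 'I_m -> 'I_n -> R) : R :=
  \big[Rmax/0]_(i < m) \big[Rmax/0]_(j < n) Rabs (M i j).

Definition mulBA {k D : nat} (B : 'I_k -> 'I_D -> R) (A : 'I_D -> 'I_k -> R)
  : 'I_k -> 'I_k -> R :=
  fun j j' => \big[Rplus/0]_(i < D) (B j i * A i j').

Definition idm {k : nat} : 'I_k -> 'I_k -> R :=
  fun j j' => if j == j' then 1 else 0.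

Definition feasible_values {k D : nat} (delta : R) (A : 'I_D -> 'I_k -> R)
  : R -> Prop :=
  fun v => exists B : 'I_k -> 'I_D -> R,
    maxnorm (fun j j' => mulBA B A j j' - idm j j') <= delta /\ v = maxnorm B.

Definition is_lambda {k D : nat} (delta : R) (A : 'I_D -> 'I_k -> R) (l : R)
  : Prop :=
  (forall v, feasible_values delta A v -> l <= v) /\
  (forall m, (forall v, feasible_values delta A v -> m <= v) -> m <= l).

(* The upper bound is witnessed by the sign matrix
   [B j i = if i \in S j then 1 else -1]: [(B A) j j'] is [1] for [j = j'] and
   otherwise a sum of [|S j'|] independent fair signs divided by [|S j'| ~ D/2],
   hence of order [sqrt (log k / D)] for all [k^2] pairs simultaneously.  The
   lower bound holds for any [A] whose columns are probability vectors, since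
   then [(B A) j j <= ||B||_max].  The good event is that the bad weight -- the
   sum over [j] of [exp (mu (D/2 - 2 |S j|))] and over [j <> j'] of
   [exp (+- lam Y j j' - lam t)], [Y] the signed overlap -- is below [1]; by
   [cosh th <= exp (2 th^2)] its mean is [O(1/k)], and Markov's inequality
   concludes. *)

From mathcomp Require Import all_boot Rstruct.
From Stdlib Require Import Reals Lra.
Open Scope R_scope.

Lemma sum_le (I : Type) (r : seq I) (P : pred I) (F G : I -> R) :
  (forall i, P i -> F i <= G i) ->
  \big[Rplus/0]_(i <- r | P i) F i <= \big[Rplus/0]_(i <- r | P i) G i.
Proof. by move=> FG; apply: (big_ind2 Rle) => *; lra || exact: FG. Qed.

(* [big_split] with the addition exposed as [Rplus], so that [lra] sees it. *)
Lemma sum_add (I : Type) (r : seq I) (P : pred I) (F G : I -> R) :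
  \big[Rplus/0]_(i <- r | P i) (F i + G i)
  = \big[Rplus/0]_(i <- r | P i) F i + \big[Rplus/0]_(i <- r | P i) G i.
Proof. exact: big_split. Qed.

Lemma sum_ge0 (I : Type) (r : seq I) (P : pred I) (F : I -> R) :
  (forall i, P i -> 0 <= F i) -> 0 <= \big[Rplus/0]_(i <- r | P i) F i.
Proof. by move=> F0; apply: (big_ind (Rle 0)) => *; lra || exact: F0. Qed.

Lemma sum_cond_le (I : finType) (P : pred I) (F : I -> R) :
  (forall i, 0 <= F i) -> \big[Rplus/0]_(i | P i) F i <= \big[Rplus/0]_i F i.
Proof.
move=> F0; rewrite big_mkcond; apply: sum_le => i _.
by case: (P i); [right | exact: F0].
Qed.

Lemma term_le_sum (I : finType) (P : pred I) (F : I -> R) (j : I) :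
  P j -> (forall i, P i -> 0 <= F i) -> F j <= \big[Rplus/0]_(i | P i) F i.
Proof.
move=> Pj F0; rewrite (bigD1 j) //=.
have : 0 <= \big[Rplus/0]_(i | P i && (i != j)) F i by apply: sum_ge0 => i /andP[/F0].
lra.
Qed.

Lemma prod_le (I : Type) (r : seq I) (P : pred I) (F G : I -> R) :
  (forall i, P i -> 0 <= F i <= G i) ->
  \big[Rmult/1]_(i <- r | P i) F i <= \big[Rmult/1]_(i <- r | P i) G i.
Proof.
move=> FG; suff [] : 0 <= \big[Rmult/1]_(i <- r | P i) F i
                     <= \big[Rmult/1]_(i <- r | P i) G i by [].
by apply: (big_ind2 (fun x y => 0 <= x <= y)) => [|x1 x2 y1 y2 ? ?|i /FG]; nra.
Qed.

Lemma sum_const (T : finType) (x : R) : \big[Rplus/0]_(i : T) x = INR #|T| * x.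
Proof.
rewrite big_const; elim: #|T| => [|n IH]; first by rewrite /=; lra.
by rewrite S_INR /= IH; lra.
Qed.

Lemma prod_const (T : finType) (x : R) : \big[Rmult/1]_(i : T) x = x ^ #|T|.
Proof. by rewrite big_const; elim: #|T| => //= n ->. Qed.

Lemma sum_indicator (T : finType) (z : T) (h : T -> R) :
  \big[Rplus/0]_(x : T) ((if x == z then 1 else 0) * h x) = h z.
Proof.
rewrite (bigD1 z) //= eqxx big1 => [|x /negbTE ->]; lra.
Qed.

Lemma INR_card (T : finType) (A : {set T}) :
  INR #|A| = \big[Rplus/0]_(i : T) (if i \in A then 1 else 0).
Proof.
rewrite -sum1_card (big_morph INR plus_INR (erefl (INR 0))) big_mkcond /=.
by apply: eq_bigr => i _; case: (i \in A).
Qed.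

Lemma INR_expn (m n : nat) : INR (expn m n) = INR m ^ n.
Proof. by elim: n => // n IH; rewrite expnS mult_INR IH. Qed.

Lemma exp_sum (I : Type) (r : seq I) (P : pred I) (F : I -> R) :
  exp (\big[Rplus/0]_(i <- r | P i) F i) = \big[Rmult/1]_(i <- r | P i) exp (F i).
Proof. exact: (big_morph exp exp_plus exp_0). Qed.

Lemma exp_mul_INR (n : nat) (a : R) : exp (INR n * a) = exp a ^ n.
Proof.
elim: n => [|n IH]; first by rewrite Rmult_0_l exp_0.
by rewrite S_INR Rmult_plus_distr_r Rmult_1_l exp_plus IH /=; ring.
Qed.

Lemma pow_mul_exp D (a : R) : (2 * exp a) ^ D = 2 ^ D * exp (INR D * a).
Proof. by rewrite Rpow_mult_distr exp_mul_INR. Qed.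

Lemma exp_le_compat (x y : R) : x <= y -> exp x <= exp y.
Proof. by case=> [/exp_increasing/Rlt_le | ->]; [| right]. Qed.

Lemma ln_gt0 (x : R) : 1 < x -> 0 < ln x.
Proof. by move=> x1; rewrite -ln_1; apply: ln_increasing; lra. Qed.

Lemma exp_lt1 (a : R) : exp a < 1 -> a < 0.
Proof. by have := exp_ineq1_le a; lra. Qed.

(** * Uniform random subsets *)

Lemma sum_subsets_prod (T : finType) (F : T -> bool -> R) :
  \big[Rplus/0]_(X : {set T}) \big[Rmult/1]_(i : T) F i (i \in X)
  = \big[Rmult/1]_(i : T) (F i true + F i false).
Proof.
under [RHS]eq_bigr do rewrite -big_bool.
rewrite bigA_distr_bigA (reindex (fun f : {ffun T -> bool} => [set i | f i])) /=.
  by apply: eq_bigr => f _; apply: eq_bigr => i _; rewrite inE.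
exists (fun X : {set T} => [ffun i => i \in X]) => [f _ | X _].
  by apply/ffunP => i; rewrite ffunE inE.
by apply/setP => i; rewrite inE ffunE.
Qed.

Lemma sum_exp_subsets (T : finType) (v : T -> bool -> R) :
  \big[Rplus/0]_(X : {set T}) exp (\big[Rplus/0]_(i : T) v i (i \in X))
  = \big[Rmult/1]_(i : T) (exp (v i true) + exp (v i false)).
Proof.
rewrite -(sum_subsets_prod T (fun i b => exp (v i b))).
by apply: eq_bigr => X _; rewrite exp_sum.
Qed.

Lemma card_subsets D : INR #|{set 'I_D}| = 2 ^ D.
Proof. by rewrite -cardsT -powersetT card_powerset cardsT card_ord INR_expn. Qed.

Lemma card_Omega D k : INR #|[set: Omega D k]| = (2 ^ D) ^ k.
Proof. by rewrite cardsT card_ffun card_ord INR_expn card_subsets. Qed.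

Lemma prod_if_eq1 k (j0 : 'I_k) (a : 'I_k -> R) :
  \big[Rmult/1]_j (if j == j0 then a j else 1) = a j0.
Proof. by rewrite (bigD1 j0) //= eqxx big1 ?Rmult_1_r // => j /negbTE ->. Qed.

Lemma prod_update k (j0 : 'I_k) (a : R) (c : 'I_k -> R) :
  (\big[Rmult/1]_j (if j == j0 then a else c j)) * c j0 = a * \big[Rmult/1]_j c j.
Proof.
rewrite (bigD1 j0) // [in RHS](bigD1 j0) //= eqxx.
by rewrite (eq_bigr c) => [|j /negbTE ->]; first ring.
Qed.

Section Marginals.

Variables D k : nat.

Lemma sum_Omega_marginal (j0 : 'I_k) (g : {set 'I_D} -> R) :
  (\big[Rplus/0]_(S : Omega D k) g (S j0)) * 2 ^ D
  = (2 ^ D) ^ k * \big[Rplus/0]_(x : {set 'I_D}) g x.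
Proof.
pose F j x := if j == j0 then g x else 1.
have -> : \big[Rplus/0]_(S : Omega D k) g (S j0)
        = \big[Rmult/1]_j (if j == j0 then \big[Rplus/0]_x g x else 2 ^ D).
  transitivity (\big[Rplus/0]_(S : Omega D k) \big[Rmult/1]_j F j (S j)).
    by apply: eq_bigr => S _; rewrite prod_if_eq1.
  rewrite -bigA_distr_bigA; apply: eq_bigr => j _; rewrite /F.
  by case: (j == j0); rewrite // sum_const card_subsets Rmult_1_r.
by rewrite (prod_update _ _ _ (fun=> 2 ^ D)) prod_const card_ord Rmult_comm.
Qed.

Lemma sum_Omega_marginal2_prod (j1 j2 : 'I_k) (g1 g2 : {set 'I_D} -> R) :
  j1 != j2 ->
  (\big[Rplus/0]_(S : Omega D k) (g1 (S j1) * g2 (S j2))) * (2 ^ D) ^ 2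
  = (2 ^ D) ^ k * (\big[Rplus/0]_x g1 x * \big[Rplus/0]_x g2 x).
Proof.
move=> j12.
pose F j x := (if j == j1 then g1 x else 1) * (if j == j2 then g2 x else 1).
pose c j := if j == j2 then \big[Rplus/0]_x g2 x else 2 ^ D.
have -> : \big[Rplus/0]_(S : Omega D k) (g1 (S j1) * g2 (S j2))
        = \big[Rmult/1]_j (if j == j1 then \big[Rplus/0]_x g1 x else c j).
  transitivity (\big[Rplus/0]_(S : Omega D k) \big[Rmult/1]_j F j (S j)).
    by apply: eq_bigr => S _; rewrite big_split /= !prod_if_eq1.
  rewrite -bigA_distr_bigA; apply: eq_bigr => j _; rewrite /F /c.
  have [-> | _] := eqVneq j j1.
    by rewrite (negbTE j12); under eq_bigr do rewrite Rmult_1_r.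
  case: (j == j2); first by under eq_bigr do rewrite Rmult_1_l.
  by rewrite sum_const card_subsets; ring.
have cj1 : c j1 = 2 ^ D by rewrite /c (negbTE j12).
transitivity ((\big[Rmult/1]_j (if j == j1 then \big[Rplus/0]_x g1 x else c j)) * c j1 * 2 ^ D).
  by rewrite cj1 /=; ring.
rewrite prod_update /c Rmult_assoc (prod_update _ _ _ (fun=> 2 ^ D)).
by rewrite prod_const card_ord; ring.
Qed.

Lemma sum_Omega_marginal2 (j1 j2 : 'I_k) (f : {set 'I_D} -> {set 'I_D} -> R) :
  j1 != j2 ->
  (\big[Rplus/0]_(S : Omega D k) f (S j1) (S j2)) * (2 ^ D) ^ 2
  = (2 ^ D) ^ k * \big[Rplus/0]_x \big[Rplus/0]_y f x y.
Proof.
move=> j12.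
have -> : \big[Rplus/0]_(S : Omega D k) f (S j1) (S j2)
        = \big[Rplus/0]_x \big[Rplus/0]_(S : Omega D k)
            ((if x == S j1 then 1 else 0) * f x (S j2)).
  by rewrite exchange_big; apply: eq_bigr => S _; rewrite sum_indicator.
rewrite big_distrl big_distrr; apply: eq_bigr => x _ /=.
rewrite (sum_Omega_marginal2_prod _ _ (fun z => if x == z then 1 else 0) (f x) j12).
have -> : \big[Rplus/0]_z (if x == z then 1 else 0) = 1.
  rewrite -[RHS](sum_indicator _ x (fun=> 1)).
  by apply: eq_bigr => z _; rewrite [x == z]eq_sym Rmult_1_r.
by rewrite Rmult_1_l.
Qed.

End Marginals.

(** * Exponential moments *)

(* [exp th <= 1 / (1 - th)] and [exp (- th) <= 1 / (1 + th)] give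
   [cosh th <= 1 / (1 - th ^ 2)], and [1 / (1 - u) <= 1 + 2 u] for [u <= 1/2]. *)
Lemma exp_add_exp_opp_le (th : R) :
  th ^ 2 <= 1 / 2 -> exp th + exp (- th) <= 2 * exp (2 * th ^ 2).
Proof.
move=> th2.
have := exp_ineq1_le th; have := exp_ineq1_le (- th).
have := exp_ineq1_le (2 * th ^ 2).
have := exp_pos th; have := exp_pos (- th).
have -> : exp (- th) = / exp th by rewrite exp_Ropp.
set e := exp th => e0 ei0 h2 h1 h0.
have ee : e * / e = 1 by apply: Rinv_r; lra.
have th1 : th ^ 2 < 1 by lra.
have thl : -1 < th < 1 by split; nra.
have e1 : e * (1 - th) <= 1 by nra.
have e2 : / e * (1 + th) <= 1 by nra.
have cosh : (e + / e) * (1 - th ^ 2) <= 2 by nra.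
have : 2 <= (1 + 2 * th ^ 2) * (1 - th ^ 2) * 2 by nra.
nra.
Qed.

Definition sgn_card {D} (x : {set 'I_D}) : R :=
  \big[Rplus/0]_(i < D) (if i \in x then -1 else 1).

Definition sgn_overlap {D} (x y : {set 'I_D}) : R :=
  \big[Rplus/0]_(i < D) (if i \in y then (if i \in x then 1 else -1) else 0).

Lemma sgn_cardE D (x : {set 'I_D}) : sgn_card x = INR D - 2 * INR #|x|.
Proof.
suff : sgn_card x + 2 * INR #|x| = INR D by lra.
rewrite INR_card big_distrr -sum_add -[INR D]Rmult_1_r -[D in INR D]card_ord.
rewrite -sum_const /=.
by apply: eq_bigr => i _; case: (i \in x); lra.
Qed.

Lemma sgn_overlap_diag D (x : {set 'I_D}) : sgn_overlap x x = INR #|x|.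
Proof. by rewrite INR_card; apply: eq_bigr => i _; case: (i \in x). Qed.

Lemma mgf_sgn_card D (th : R) : th ^ 2 <= 1 / 2 ->
  \big[Rplus/0]_(x : {set 'I_D}) exp (th * sgn_card x)
  <= 2 ^ D * exp (INR D * (2 * th ^ 2)).
Proof.
move=> th2; rewrite -pow_mul_exp.
have -> : (2 * exp (2 * th ^ 2)) ^ D = \big[Rmult/1]_(i < D) (2 * exp (2 * th ^ 2)).
  by rewrite prod_const card_ord.
under eq_bigr do rewrite /sgn_card big_distrr.
rewrite (sum_exp_subsets _ (fun i b => th * (if b then -1 else 1))).
apply: prod_le => i _.
rewrite Rmult_1_r Rmult_comm -Ropp_mult_distr_l Rmult_1_l.
have := exp_add_exp_opp_le th th2; have := exp_pos th; have := exp_pos (- th).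
lra.
Qed.

Lemma mgf_sgn_overlap D (th : R) : th ^ 2 <= 1 / 2 ->
  \big[Rplus/0]_(x : {set 'I_D}) \big[Rplus/0]_(y : {set 'I_D})
    exp (th * sgn_overlap x y)
  <= (2 ^ D) ^ 2 * exp (INR D * (2 * th ^ 2)).
Proof.
move=> th2.
rewrite /= Rmult_1_r -Rpow_mult_distr exp_mul_INR -Rpow_mult_distr.
have -> : (2 * 2 * exp (2 * th ^ 2)) ^ D
        = \big[Rmult/1]_(i < D) (2 * 2 * exp (2 * th ^ 2)).
  by rewrite prod_const card_ord.
under eq_bigr => x _.
  under eq_bigr do rewrite /sgn_overlap big_distrr.
  rewrite (sum_exp_subsets _ (fun i b =>
    th * (if b then (if i \in x then 1 else -1) else 0))).
over.
rewrite /= (sum_subsets_prod _ (fun i a =>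
  exp (th * (if a then 1 else -1)) + exp (th * 0))).
apply: prod_le => i _.
rewrite Rmult_0_r exp_0 Rmult_1_r Rmult_comm -Ropp_mult_distr_l Rmult_1_l.
have -> : th * th = th ^ 2 by ring.
have := exp_add_exp_opp_le th th2; have := exp_pos th; have := exp_pos (- th).
have := exp_ineq1_le (2 * th ^ 2); have : 0 <= th ^ 2 by nra.
lra.
Qed.

(** * The optimal value [lambda_delta] *)

Lemma bigmax_ge (I : eqType) (r : seq I) (F : I -> R) (x : I) :
  x \in r -> F x <= \big[Rmax/0]_(i <- r) F i.
Proof.
elim: r => //= y r IH; rewrite inE big_cons => /orP [/eqP -> | /IH xr].
  exact: Rmax_l.
exact: Rle_trans _ _ _ xr (Rmax_r _ _).
Qed.

Lemma bigmax_le (I : Type) (r : seq I) (P : pred I) (F : I -> R) (b : R) :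
  0 <= b -> (forall i, F i <= b) -> \big[Rmax/0]_(i <- r | P i) F i <= b.
Proof. by move=> b0 Fb; apply: (big_ind (fun x => x <= b)) => // *; apply: Rmax_lub. Qed.

Lemma maxnorm_ge m n (M : 'I_m -> 'I_n -> R) i j : Rabs (M i j) <= maxnorm M.
Proof.
have row_le :=
  bigmax_ge _ _ (fun i => \big[Rmax/0]_(j < n) Rabs (M i j)) _ (mem_index_enum i).
exact: Rle_trans _ _ _ (bigmax_ge _ _ (fun j => Rabs (M i j)) _ (mem_index_enum j)) row_le.
Qed.

Lemma maxnorm_le m n (M : 'I_m -> 'I_n -> R) (b : R) :
  0 <= b -> (forall i j, Rabs (M i j) <= b) -> maxnorm M <= b.
Proof. by move=> b0 Mb; apply: bigmax_le => // i; apply: bigmax_le. Qed.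

Lemma maxnorm_ge_one_sub k D (A : 'I_D -> 'I_k -> R) (B : 'I_k -> 'I_D -> R)
    (j0 : 'I_k) (delta : R) :
  (forall i, 0 <= A i j0) -> \big[Rplus/0]_(i < D) A i j0 = 1 ->
  maxnorm (fun j j' => mulBA B A j j' - idm j j') <= delta ->
  1 - delta <= maxnorm B.
Proof.
move=> A0 A1 BAI.
have BA00 : Rabs (mulBA B A j0 j0 - 1) <= delta.
  apply: Rle_trans _ _ _ _ BAI.
  have := maxnorm_ge _ _ (fun j j' => mulBA B A j j' - idm j j') j0 j0.
  by rewrite /= {1}/idm eqxx.
have : mulBA B A j0 j0 <= maxnorm B.
  rewrite /mulBA -[maxnorm B]Rmult_1_r -A1 big_distrr.
  apply: sum_le => i _; apply: Rmult_le_compat_r => //.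
  exact: Rle_trans _ _ _ (Rle_abs _) (maxnorm_ge _ _ B j0 i).
have := Rle_abs (- (mulBA B A j0 j0 - 1)); rewrite Rabs_Ropp.
lra.
Qed.

Lemma Amat_ge0 D k (S : Omega D k) i j : 0 <= Amat S i j.
Proof.
rewrite /Amat; case: ifP => [iS | _]; last lra.
by apply/Rlt_le/Rinv_0_lt_compat/lt_0_INR/ltP/card_gt0P; exists i.
Qed.

Lemma col_sum_Amat D k (S : Omega D k) j : (0 < #|S j|)%nat ->
  \big[Rplus/0]_(i < D) Amat S i j = 1.
Proof.
move=> Sj0; have card0 : 0 < INR #|S j| by apply/lt_0_INR/ltP.
rewrite -(Rinv_r (INR #|S j|)); last lra.
rewrite {1}INR_card big_distrl /=; apply: eq_bigr => i _.
by rewrite /Amat; case: (i \in S j) => /=; lra.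
Qed.

Definition sign_matrix {D k} (S : Omega D k) (j : 'I_k) (i : 'I_D) : R :=
  if i \in S j then 1 else -1.

Lemma mulBA_sign_matrix D k (S : Omega D k) j j' :
  mulBA (sign_matrix S) (Amat S) j j' = sgn_overlap (S j) (S j') * / INR #|S j'|.
Proof.
rewrite /mulBA /sgn_overlap big_distrl; apply: eq_bigr => i _ /=.
by rewrite /sign_matrix /Amat; case: (i \in S j'); case: (i \in S j) => /=; ring.
Qed.

Lemma maxnorm_sign_matrix D k (S : Omega D k) : maxnorm (sign_matrix S) <= 1.
Proof.
apply: maxnorm_le => [|j i]; first lra.
by rewrite /sign_matrix; case: (i \in S j); rewrite ?Rabs_Ropp Rabs_R1; lra.
Qed.

Lemma sign_matrix_feasible D k (S : Omega D k) (delta : R) :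
  0 <= delta -> (forall j, (0 < #|S j|)%nat) ->
  (forall j j', j != j' -> Rabs (sgn_overlap (S j) (S j')) <= delta * INR #|S j'|) ->
  maxnorm (fun j j' => mulBA (sign_matrix S) (Amat S) j j' - idm j j') <= delta.
Proof.
move=> delta0 S0 overlap_le; apply: maxnorm_le => // j j'.
have card0 : 0 < INR #|S j'| by apply/lt_0_INR/ltP.
rewrite mulBA_sign_matrix /idm; case: eqP => [-> | /eqP jj'].
  rewrite sgn_overlap_diag Rinv_r; last exact: Rgt_not_eq.
  by rewrite Rminus_diag Rabs_R0.
rewrite Rminus_0_r Rabs_mult (Rabs_pos_eq (/ _)); last exact/Rlt_le/Rinv_0_lt_compat.
apply: (Rmult_le_reg_r (INR #|S j'|)) => //.
by rewrite Rmult_assoc Rinv_l ?Rmult_1_r; [exact: overlap_le | lra].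
Qed.

(* Completeness is applied to the negated set, since Stdlib provides least
   upper bounds only. *)
Lemma inf_exists (P : R -> Prop) (b v0 : R) :
  P v0 -> (forall v, P v -> b <= v) ->
  exists l, ((forall v, P v -> l <= v) /\
             (forall m, (forall v, P v -> m <= v) -> m <= l)) /\ b <= l <= v0.
Proof.
move=> Pv0 Pb.
have E_bound : bound (fun x => P (- x)) by exists (- b) => x /Pb; lra.
have E_ne : exists x, P (- x) by exists (- v0); rewrite Ropp_involutive.
have [m [m_ub m_lub]] := completeness _ E_bound E_ne.
have m_lb : forall v, P v -> - m <= v.
  move=> v Pv; suff : - v <= m by lra.
  by apply: m_ub; rewrite Ropp_involutive.
exists (- m); split; first split => // m' m'_lb.
  suff : m <= - m' by lra.
  by apply: m_lub => x /m'_lb; lra.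
split; last exact: m_lb.
suff : m <= - b by lra.
by apply: m_lub => x /Pb; lra.
Qed.

Lemma lambda_bounds D k (S : Omega D k) (delta : R) :
  (0 < k)%nat -> 0 <= delta -> (forall j, (0 < #|S j|)%nat) ->
  (forall j j', j != j' -> Rabs (sgn_overlap (S j) (S j')) <= delta * INR #|S j'|) ->
  exists l, is_lambda delta (Amat S) l /\ 1 - delta <= l <= 1.
Proof.
move=> k0 delta0 S0 overlap_le.
have feasible_sign : feasible_values delta (Amat S) (maxnorm (sign_matrix S)).
  by exists (sign_matrix S); split => //; apply: sign_matrix_feasible.
have feasible_ge : forall v, feasible_values delta (Amat S) v -> 1 - delta <= v.
  move=> _ [B [BAI ->]]; apply: (maxnorm_ge_one_sub _ _ _ _ (Ordinal k0)) BAI.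
    by move=> i; apply: Amat_ge0.
  exact: col_sum_Amat.
have [l [lam_l [l_lb l_ub]]] := inf_exists _ _ _ feasible_sign feasible_ge.
exists l; do 2!split => //.
exact: Rle_trans _ _ _ l_ub (maxnorm_sign_matrix _ _ S).
Qed.

(** * The bad weight *)

Lemma card_markov (T : finType) (w : T -> R) : (forall x, 0 <= w x) ->
  INR #|[set: T]| <= INR #|[set x | Rlt_dec (w x) 1]| + \big[Rplus/0]_x w x.
Proof.
move=> w0; rewrite !INR_card -sum_add; apply: sum_le => x _.
by rewrite !inE; case: Rlt_dec => /= [_ | /Rnot_lt_le]; have := w0 x; lra.
Qed.

Definition bad_weight {D k} (lam t mu : R) (S : Omega D k) : R :=
  \big[Rplus/0]_j exp (mu * sgn_card (S j) - mu * (INR D / 2))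
  + \big[Rplus/0]_j \big[Rplus/0]_(j' | j != j')
      (exp (lam * sgn_overlap (S j) (S j') - lam * t)
       + exp ((- lam) * sgn_overlap (S j) (S j') - lam * t)).

Lemma bad_weight_ge0 D k lam t mu (S : Omega D k) : 0 <= bad_weight lam t mu S.
Proof.
apply: Rplus_le_le_0_compat; apply: sum_ge0 => j _; first exact/Rlt_le/exp_pos.
apply: sum_ge0 => j' _; apply: Rplus_le_le_0_compat; exact/Rlt_le/exp_pos.
Qed.

Lemma bad_weight_lt1 D k lam t mu (S : Omega D k) :
  0 < lam -> 0 < mu -> bad_weight lam t mu S < 1 ->
  (forall j, INR D / 4 < INR #|S j|) /\
  (forall j j', j != j' -> Rabs (sgn_overlap (S j) (S j')) < t).
Proof.
move=> lam0 mu0; rewrite /bad_weight.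
set card_part := \big[Rplus/0]_j _; set overlap_part := \big[Rplus/0]_j _ => small.
have exp0 a : 0 <= exp a by exact/Rlt_le/exp_pos.
pose pair i i' := exp (lam * sgn_overlap (S i) (S i') - lam * t)
                  + exp ((- lam) * sgn_overlap (S i) (S i') - lam * t).
have pair0 i i' : 0 <= pair i i' by apply: Rplus_le_le_0_compat.
have card_part0 : 0 <= card_part by apply: sum_ge0.
have overlap_part0 : 0 <= overlap_part.
  by apply: sum_ge0 => j _; apply: sum_ge0 => j' _; apply: pair0.
split=> [j | j j' jj'].
  have : exp (mu * sgn_card (S j) - mu * (INR D / 2)) <= card_part.
    by apply: (term_le_sum _ (fun=> true)) => // i _; apply: exp0.
  have := exp0 (mu * sgn_card (S j) - mu * (INR D / 2)).
  move=> ? ?; have /exp_lt1 : exp (mu * sgn_card (S j) - mu * (INR D / 2)) < 1 by lra.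
  by rewrite sgn_cardE; nra.
have : pair j j' <= overlap_part.
  apply: Rle_trans (term_le_sum _ _ (pair j) j' jj' (fun i _ => pair0 j i)) _.
  apply: (term_le_sum _ (fun=> true) (fun i => \big[Rplus/0]_(i' | i != i') pair i i'))
    => // i _.
  exact: sum_ge0.
have := exp0 (lam * sgn_overlap (S j) (S j') - lam * t).
have := exp0 ((- lam) * sgn_overlap (S j) (S j') - lam * t).
rewrite /pair => ? ? ?.
have /exp_lt1 ? : exp (lam * sgn_overlap (S j) (S j') - lam * t) < 1 by lra.
have /exp_lt1 ? : exp ((- lam) * sgn_overlap (S j) (S j') - lam * t) < 1 by lra.
apply: Rabs_def1; nra.
Qed.

Section MeanBadWeight.

Variables D k : nat.

Let pow2_pos : 0 < 2 ^ D. Proof. by apply: pow_lt; lra. Qed.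

Let exp_sub (a c : R) : exp (a - c) = exp a * exp (- c).
Proof. by rewrite -exp_plus. Qed.

Lemma sum_Omega_exp_sgn_card (j : 'I_k) (th c : R) : th ^ 2 <= 1 / 2 ->
  \big[Rplus/0]_(S : Omega D k) exp (th * sgn_card (S j) - c)
  <= (2 ^ D) ^ k * exp (INR D * (2 * th ^ 2) - c).
Proof.
move=> th2; apply: (Rmult_le_reg_r (2 ^ D)) => //.
rewrite (sum_Omega_marginal _ _ _ (fun x => exp (th * sgn_card x - c))).
rewrite Rmult_assoc; apply: Rmult_le_compat_l; first exact/Rlt_le/pow_lt.
under eq_bigr do rewrite exp_sub.
rewrite -big_distrl exp_sub.
apply: Rle_trans (Rmult_le_compat_r _ _ _ (Rlt_le _ _ (exp_pos (- c)))
                    (mgf_sgn_card D th th2)) _.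
by right; ring.
Qed.

Lemma sum_Omega_exp_sgn_overlap (j j' : 'I_k) (th c : R) :
  j != j' -> th ^ 2 <= 1 / 2 ->
  \big[Rplus/0]_(S : Omega D k) exp (th * sgn_overlap (S j) (S j') - c)
  <= (2 ^ D) ^ k * exp (INR D * (2 * th ^ 2) - c).
Proof.
move=> jj' th2; apply: (Rmult_le_reg_r ((2 ^ D) ^ 2)); first exact: pow_lt.
rewrite (sum_Omega_marginal2 _ _ _ _ (fun x y => exp (th * sgn_overlap x y - c)) jj').
rewrite Rmult_assoc; apply: Rmult_le_compat_l; first exact/Rlt_le/pow_lt.
under eq_bigr do under eq_bigr do rewrite exp_sub.
under eq_bigr do rewrite -big_distrl.
rewrite -big_distrl exp_sub.
apply: Rle_trans (Rmult_le_compat_r _ _ _ (Rlt_le _ _ (exp_pos (- c)))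
                    (mgf_sgn_overlap D th th2)) _.
by right; ring.
Qed.

Lemma sum_bad_weight (lam t mu : R) : lam ^ 2 <= 1 / 2 -> mu ^ 2 <= 1 / 2 ->
  \big[Rplus/0]_(S : Omega D k) bad_weight lam t mu S
  <= (2 ^ D) ^ k * (INR k * exp (INR D * (2 * mu ^ 2) - mu * (INR D / 2))
                    + INR k * INR k * (2 * exp (INR D * (2 * lam ^ 2) - lam * t))).
Proof.
move=> lam2 mu2; set M := (2 ^ D) ^ k.
have M0 : 0 <= M by exact/Rlt_le/pow_lt.
rewrite /bad_weight sum_add Rmult_plus_distr_l.
apply: Rplus_le_compat; rewrite exchange_big.
  apply: Rle_trans (sum_le _ _ _ _ (fun=> M * exp (INR D * (2 * mu ^ 2) - mu * (INR D / 2))) _) _.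
    by move=> j _; apply: sum_Omega_exp_sgn_card.
  by rewrite sum_const card_ord; right; ring.
set e := M * (2 * exp (INR D * (2 * lam ^ 2) - lam * t)).
have e0 : 0 <= e by apply: Rmult_le_pos => //; have := exp_pos (INR D * (2 * lam ^ 2) - lam * t); lra.
apply: Rle_trans (sum_le _ _ _ _ (fun=> INR k * e) _) _; last first.
  by rewrite sum_const card_ord /e; right; ring.
move=> j _; rewrite exchange_big.
apply: Rle_trans (sum_le _ _ _ _ (fun=> e) _) _; last first.
  by apply: Rle_trans (sum_cond_le _ _ _ (fun=> e0)) _; rewrite sum_const card_ord; right.
move=> j' jj'; rewrite sum_add.
have lam_mgf := sum_Omega_exp_sgn_overlap j j' lam (lam * t) jj' lam2.
have := sum_Omega_exp_sgn_overlap j j' (- lam) (lam * t) jj'.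
rewrite -Rsqr_pow2 -Rsqr_neg Rsqr_pow2 => /(_ lam2) opp_lam_mgf.
apply: Rle_trans (Rplus_le_compat _ _ _ _ lam_mgf opp_lam_mgf) _.
by rewrite /e /M; right; ring.
Qed.

End MeanBadWeight.

Lemma eventually_INR_gt (x : R) : exists K, forall k, (K <= k)%nat -> x < INR k.
Proof.
have [K xK] := INR_unbounded x; exists K => k /leP Kk.
by have := le_INR _ _ Kk; lra.
Qed.

Lemma sqrt_ln_ratio (k D : nat) : 1 < INR k -> 64 * ln (INR k) <= INR D ->
  0 < sqrt (ln (INR k) / INR D) /\
  sqrt (ln (INR k) / INR D) * sqrt (ln (INR k) / INR D) * INR D = ln (INR k).
Proof.
move=> k1 kD; have L0 := ln_gt0 _ k1.
have D0 : 0 < INR D by lra.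
have ratio0 : 0 < ln (INR k) / INR D by apply: Rdiv_lt_0_compat.
split; first exact: sqrt_lt_R0.
by rewrite sqrt_sqrt; [field; lra | lra].
Qed.

(* With [s = sqrt (ln k / D)] the two exponents are [-D/32 <= -2 ln k] and
   [-32 D s^2 = -32 ln k <= -3 ln k]. *)
Lemma mean_bad_weight_le (k D : nat) (s : R) :
  1 < INR k -> 64 * ln (INR k) <= INR D -> s * s * INR D = ln (INR k) ->
  INR k * exp (INR D * (2 * (1 / 8) ^ 2) - 1 / 8 * (INR D / 2))
  + INR k * INR k * (2 * exp (INR D * (2 * (4 * s) ^ 2) - 4 * s * (16 * INR D * s)))
  <= 3 / INR k.
Proof.
move=> k1 kD sD; set L := ln (INR k) in kD sD.
have L0 : 0 < L := ln_gt0 _ k1.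
have eL : exp L = INR k by rewrite /L exp_ln; lra.
have e2 : exp (- (2 * L)) * (INR k * INR k) = 1.
  by rewrite exp_Ropp -Rplus_diag exp_plus eL; field; lra.
have e3 : exp (- (3 * L)) * (INR k * INR k * INR k) = 1.
  by rewrite exp_Ropp (_ : 3 * L = L + L + L) ?exp_plus ?eL; [field|]; lra.
have card_exp : exp (INR D * (2 * (1 / 8) ^ 2) - 1 / 8 * (INR D / 2)) <= exp (- (2 * L)).
  by apply: exp_le_compat; lra.
have overlap_exp :
    exp (INR D * (2 * (4 * s) ^ 2) - 4 * s * (16 * INR D * s)) <= exp (- (3 * L)).
  by apply: exp_le_compat; nra.
have k0 : 0 < INR k by lra.
have := Rmult_le_compat_r (INR k * INR k) _ _ ltac:(nra) card_exp.
have := Rmult_le_compat_r (INR k * INR k * INR k) _ _ ltac:(nra) overlap_exp.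
rewrite e2 e3 => overlap_le card_le.
apply: (Rmult_le_reg_r (INR k)) => //.
have -> : 3 / INR k * INR k = 3 by field; lra.
nra.
Qed.

(* [t = 16 D s] and [|S j| > D/4] give [|Y| / |S j'| < 64 s]; [lam = 4 s] makes
   the Chernoff exponent [2 D lam^2 - lam t] equal to [-32 ln k]. *)
Definition good_samples (D k : nat) (s : R) : {set Omega D k} :=
  [set S | Rlt_dec (bad_weight (4 * s) (16 * INR D * s) (1 / 8) S) 1].

Lemma card_good_samples (k D : nat) (s eps : R) :
  0 < eps -> 1 < INR k -> 3 / eps < INR k -> 64 * ln (INR k) <= INR D ->
  s * s * INR D = ln (INR k) ->
  (1 - eps) * INR #|[set: Omega D k]| <= INR #|good_samples D k s|.
Proof.
move=> eps0 k1 k_eps kD sD.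
have L0 := ln_gt0 _ k1.
have lam2 : (4 * s) ^ 2 <= 1 / 2 by nra.
have mu2 : (1 / 8) ^ 2 <= 1 / 2 by lra.
have markov : INR #|[set: Omega D k]|
    <= INR #|good_samples D k s|
       + \big[Rplus/0]_(S : Omega D k) bad_weight (4 * s) (16 * INR D * s) (1 / 8) S.
  exact: card_markov _ _ (bad_weight_ge0 D k _ _ _).
have mean := sum_bad_weight D k _ (16 * INR D * s) _ lam2 mu2.
have small := mean_bad_weight_le k D s k1 kD sD.
have eps_k : 3 / INR k <= eps.
  apply: (Rmult_le_reg_r (INR k)); first lra.
  have -> : 3 / INR k * INR k = 3 by field; lra.
  have : 3 / eps * eps = 3 by field; lra.
  nra.
have M0 : 0 <= (2 ^ D) ^ k by apply/Rlt_le/pow_lt/pow_lt; lra.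
have := Rmult_le_compat_l _ _ _ M0 (Rle_trans _ _ _ small eps_k).
have := Rle_trans _ _ _ markov (Rplus_le_compat_l _ _ _ mean).
rewrite card_Omega; lra.
Qed.

Lemma good_sample_lambda (D k : nat) (s delta : R) (S : Omega D k) :
  (0 < k)%nat -> 0 < s -> S \in good_samples D k s -> 64 * s <= delta ->
  exists l, is_lambda delta (Amat S) l /\ 1 - delta <= l <= 1.
Proof.
move=> k0 s0; rewrite inE => /sumboolP good delta_ge.
have lam0 : 0 < 4 * s by lra.
have mu0 : 0 < 1 / 8 by lra.
have [card_ge overlap_lt] := bad_weight_lt1 _ _ _ _ _ S lam0 mu0 good.
have card0 j : 0 < INR #|S j| by have := pos_INR D; have := card_ge j; lra.
apply: lambda_bounds => // [|j|j j' jj']; first lra.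
  by case: #|S j| (card0 j) => //= /Rlt_irrefl.
have := overlap_lt j j' jj'; have := card_ge j'.
have := Rmult_le_compat_r _ _ _ (Rlt_le _ _ (card0 j')) delta_ge.
nra.
Qed.

Theorem lemma6p2 :
  exists c : R, 0 < c /\
  forall eps : R, 0 < eps ->
  exists K : nat,
  forall k D : nat, (K <= k)%nat -> c * ln (INR k) <= INR D ->
  exists G : {set Omega D k},
    (1 - eps) * INR #|[set: Omega D k]| <= INR #|G| /\
    forall S : Omega D k, S \in G ->
    forall delta : R, c * sqrt (ln (INR k) / INR D) <= delta ->
    exists l : R, is_lambda delta (Amat S) l /\ 1 - delta <= l <= 1.
Proof.
exists 64; split; first lra.
move=> eps eps0; have [K K_large] := eventually_INR_gt (Rmax 1 (3 / eps)).
exists K => k D /K_large k_large kD.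
have k1 : 1 < INR k by have := Rmax_l 1 (3 / eps); lra.
have k_eps : 3 / eps < INR k by have := Rmax_r 1 (3 / eps); lra.
have [s0 sD] := sqrt_ln_ratio k D k1 kD.
exists (good_samples D k (sqrt (ln (INR k) / INR D))).
split; first exact: card_good_samples.
move=> S S_good delta; apply: good_sample_lambda S_good => //.
by apply/ltP; apply: INR_lt; rewrite INR_0; lra.
Qed.
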